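(* Let $\Omega\subset\mathbb{R}^n$ be a domain with $\mathrm{width}(\Omega)<+\infty$, $f\in L^\infty(\Omega)$, $g\in C(\partial\Omega)\cap L^\infty(\partial\Omega)$, $(\varepsilon_i)$ a sequence of positive numbers with $\varepsilon_i\to0$, and for each $i$ let $u_i:\overline\Omega\to\mathbb{R}$ be a bounded solution of $\Delta^{\varepsilon_i}_\infty u_i=\varepsilon_i^2 f$ in $\Omega$, $u_i=g$ on $\partial\Omega$. Then for every $y_0\in\partial\Omega$ and every $\varepsilon>0$ there exist $\delta>0$ and $N\in\mathbb{N}$ such that for all $x\in\Omega$ with $d(y_0,x)\le\delta$ and all $i>N$, \[ |u_i(x)-g(y_0)|\le\varepsilon. \]
   Context: $d(x,y)$ is the intrinsic metric of $\overline\Omega$ (infimum of lengths of paths in $\overline\Omega$ from $x$ to $y$); $\mathrm{width}(\Omega)=\sup_{x\in\Omega}\inf_{y\in\partial\Omega}d(y,x)$. For $\varepsilon>0$, $B_x(\varepsilon)=\{y\in\overline\Omega: d(x,y)<\varepsilon\}$ and $\Delta^{\varepsilon}_\infty w(x)=\inf_{y\in B_x(\varepsilon)}w(y)+\sup_{y\in B_x(\varepsilon)}w(y)-2w(x)$. *)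

(* R^n is modelled as 'rV[R]_n with the
   Euclidean norm defined below (path lengths use the Euclidean norm). *)
From HB Require Import structures.
From mathcomp Require Import all_boot all_order all_algebra.
From mathcomp Require Import all_classical all_reals all_analysis.
Set Implicit Arguments. Unset Strict Implicit. Unset Printing Implicit Defensive.
Import Order.TTheory GRing.Theory Num.Theory.
Import numFieldNormedType.Exports.
Local Open Scope classical_set_scope.
Local Open Scope ring_scope.

Section Defs.
Context {R : realType} {n : nat}.

Definition enorm (x : 'rV[R]_n) : R := Num.sqrt (\sum_(i < n) x ord0 i ^+ 2).

Definition is_partition01 (k : nat) (t : nat -> R) : Prop :=
  t 0%N = 0 /\ t k = 1 /\ forall i, (i < k)%N -> t i <= t i.+1.

Definition path_length (gamma : R -> 'rV[R]_n) : \bar R :=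
  ereal_sup [set l : \bar R | exists (k : nat) (t : nat -> R),
     is_partition01 k t /\
     l = ((\sum_(i < k) enorm (gamma (t i.+1) - gamma (t i)))%:E)%E].

Definition bdry (Om : set 'rV[R]_n) : set 'rV[R]_n := closure Om `\` interior Om.

(* intrinsic metric of the closure of Om: infimum of lengths of continuous
   paths in closure Om from x to y (+oo if there is none) *)
Definition idist (Om : set 'rV[R]_n) (x y : 'rV[R]_n) : \bar R :=
  ereal_inf [set path_length gamma | gamma in
    [set gamma : R -> 'rV[R]_n | {within `[0, 1], continuous gamma} /\
       gamma 0 = x /\ gamma 1 = y /\
       (forall t, 0 <= t <= 1 -> closure Om (gamma t))]].

Definition width (Om : set 'rV[R]_n) : \bar R :=
  ereal_sup [set ereal_inf [set idist Om y x | y in bdry Om] | x in Om].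

Definition iball (Om : set 'rV[R]_n) (x : 'rV[R]_n) (eps : R) : set 'rV[R]_n :=
  [set y | closure Om y /\ (idist Om x y < eps%:E)%E].

Definition eps_lap (Om : set 'rV[R]_n) (eps : R) (w : 'rV[R]_n -> R)
  (x : 'rV[R]_n) : R :=
  inf (w @` iball Om x eps) + sup (w @` iball Om x eps) - 2 * w x.

Definition domain (Om : set 'rV[R]_n) : Prop :=
  Om !=set0 /\ open Om /\ connected Om.

End Defs.

(* The DPP inequality inf_B u + sup_B u - 2 u(x) >= - eps^2 |f|_oo holds for u_i
   and for -u_i on the intrinsic balls B = B_x(eps_i).  Such a subsolution stays
   below every strict supersolution dominating it on the boundary: compare at a
   near-maximiser of the difference.  Strict supersolutions are built from the
   least number k(x) of eps-steps leading from a set S to x, composed with a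
   concave parabola q truncated at its top: k grows by at most one across a
   ball, and the second difference of q is - b eps^2.  With S the boundary,
   finite width bounds k and hence u_i uniformly; with S = {y0}, continuity of g
   at y0 then gives u_i(x) <= g(y0) + eta + C eps_i k(x), and eps_i k(x) is at
   most 4 d(y0, x) + eps_i: a path of length L can be cut into at most
   4 L / eps + 1 pieces of intrinsic length < eps. *)

From mathcomp Require Import all_boot all_order all_algebra.
From mathcomp Require Import all_classical all_reals all_analysis.
From mathcomp Require Import ring lra zify.
Set Implicit Arguments. Unset Strict Implicit. Unset Printing Implicit Defensive.
Import Order.TTheory GRing.Theory Num.Theory.
Import numFieldNormedType.Exports.
Local Open Scope classical_set_scope.
Local Open Scope ring_scope.

Section EuclideanNorm.
Context {R : realType} {n : nat}.
Local Notation V := 'rV[R]_n.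
Implicit Types x y : V.

Lemma enorm_ge0 x : 0 <= enorm x.
Proof. exact: sqrtr_ge0. Qed.

Lemma enorm0 : enorm (0 : V) = 0.
Proof. by rewrite /enorm big1 ?sqrtr0 // => i _; rewrite mxE expr0n. Qed.

Lemma enormN x : enorm (- x) = enorm x.
Proof. by rewrite /enorm; congr Num.sqrt; apply: eq_bigr => i _; rewrite mxE sqrrN. Qed.

Lemma coord_le_enorm x i : `|x ord0 i| <= enorm x.
Proof.
rewrite /enorm -sqrtr_sqr; apply: ler_wsqrtr.
by rewrite (bigD1 i) //= lerDl; apply: sumr_ge0 => j _; exact: sqr_ge0.
Qed.

Lemma coord_le_norm x i : `|x ord0 i| <= `|x|.
Proof.
rewrite [`|x|]mx_normrE.
exact: (le_bigmax _ (fun ij : 'I_1 * 'I_n => `|x ij.1 ij.2|) (ord0, i)).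
Qed.

Lemma norm_le_enorm x : `|x| <= enorm x.
Proof.
rewrite [`|x|]mx_normrE; elim/big_ind: _ => [|a b ha hb|[i j] _ /=].
- exact: enorm_ge0.
- by rewrite ge_max ha hb.
- by rewrite (ord1 i); exact: coord_le_enorm.
Qed.

Lemma enorm_le_norm x : enorm x <= Num.sqrt n%:R * `|x|.
Proof.
have -> : `|x| = Num.sqrt (`|x| ^+ 2) by rewrite sqrtr_sqr ger0_norm.
rewrite -sqrtrM ?ler0n //; apply: ler_wsqrtr.
rewrite -[n in n%:R]card_ord mulr_natl -sumr_const.
apply: ler_sum => i _.
by rewrite -real_normK ?num_real // lerXn2r ?nnegrE ?coord_le_norm.
Qed.

Lemma cauchy_schwarz x y :
  (\sum_(i < n) x ord0 i * y ord0 i) ^+ 2 <=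
  (\sum_(i < n) x ord0 i ^+ 2) * (\sum_(i < n) y ord0 i ^+ 2).
Proof.
set A := \sum_(i < n) x ord0 i ^+ 2; set B := \sum_(i < n) x ord0 i * y ord0 i.
set C := \sum_(i < n) y ord0 i ^+ 2.
have quad t : 0 <= t ^+ 2 * A + 2 * t * B + C.
  have -> : t ^+ 2 * A + 2 * t * B + C = \sum_(i < n) (t * x ord0 i + y ord0 i) ^+ 2.
    by rewrite /A /B /C !mulr_sumr -!big_split /=; apply: eq_bigr => i _; ring.
  by apply: sumr_ge0 => i _; exact: sqr_ge0.
have [A0|Ann] := eqVneq A 0.
  have x0 i : x ord0 i = 0.
    apply/eqP; rewrite -sqrf_eq0; apply/eqP.
    by move/eqP: A0; rewrite psumr_eq0 => [/allP/(_ i (mem_index_enum _))/eqP|j _];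
      [|exact: sqr_ge0].
  by rewrite A0 mul0r /B big1 ?expr0n // => i _; rewrite x0 mul0r.
have Agt0 : 0 < A by rewrite lt_def Ann; apply: sumr_ge0 => i _; exact: sqr_ge0.
have := quad (- B / A).
have -> : (- B / A) ^+ 2 * A + 2 * (- B / A) * B + C = C - B ^+ 2 / A by field.
by rewrite subr_ge0 ler_pdivrMr // mulrC.
Qed.

Lemma enormD x y : enorm (x + y) <= enorm x + enorm y.
Proof.
have sq_sum_ge0 (z : V) : 0 <= \sum_(i < n) z ord0 i ^+ 2.
  by apply: sumr_ge0 => i _; exact: sqr_ge0.
rewrite -[leRHS]ger0_norm ?addr_ge0 ?enorm_ge0 // -sqrtr_sqr /enorm.
apply: ler_wsqrtr; rewrite sqrrD !sqr_sqrtr //.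
have -> : \sum_(i < n) (x + y) ord0 i ^+ 2 = \sum_(i < n) x ord0 i ^+ 2 +
    2 * \sum_(i < n) x ord0 i * y ord0 i + \sum_(i < n) y ord0 i ^+ 2.
  by rewrite mulr_sumr -!big_split /=; apply: eq_bigr => i _; rewrite mxE; ring.
have cs : \sum_(i < n) x ord0 i * y ord0 i <=
    Num.sqrt (\sum_(i < n) x ord0 i ^+ 2) * Num.sqrt (\sum_(i < n) y ord0 i ^+ 2).
  rewrite -sqrtrM //; apply: le_trans (ler_norm _) _.
  by rewrite -sqrtr_sqr; apply/ler_wsqrtr/cauchy_schwarz.
by rewrite -mulr_natr; lra.
Qed.

Lemma enorm_sum (F : nat -> V) m :
  enorm (\sum_(0 <= q < m) F q) <= \sum_(0 <= q < m) enorm (F q).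
Proof.
elim: m => [|m IH]; first by rewrite !big_geq // enorm0.
by rewrite !big_nat_recr //=; apply: le_trans (enormD _ _) _; rewrite lerD2r.
Qed.

End EuclideanNorm.

Section Subdivisions.
Context {R : realType}.
Implicit Types (a b c : R) (k : nat) (t : nat -> R).

Definition subdivision a b k t :=
  t 0%N = a /\ t k = b /\ forall i, (i < k)%N -> t i <= t i.+1.

Lemma subdivision_le a b k t : subdivision a b k t ->
  forall p q, (p <= q <= k)%N -> t p <= t q.
Proof.
move=> [_ [_ tS]] p; elim=> [|q IH] /andP [pq qk].
  by move: pq; rewrite leqn0 => /eqP ->.
move: pq; rewrite leq_eqVlt => /orP [/eqP -> //|pq].
by apply: le_trans (tS q qk); apply: IH; rewrite -ltnS pq ltnW.
Qed.

Lemma subdivision_bounds a b k t p : subdivision a b k t -> (p <= k)%N -> a <= t p <= b.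
Proof.
move=> ht pk; have [t0 [tk _]] := ht.
by rewrite -{1}t0 -tk !(subdivision_le ht) ?pk ?leqnn.
Qed.

Definition uniform_seq a b M : nat -> R := fun q => a + q%:R / M%:R * (b - a).

Lemma subdivision_uniform a b M : a <= b -> (0 < M)%N ->
  subdivision a b M (uniform_seq a b M).
Proof.
move=> ab M0; split; first by rewrite /uniform_seq mul0r mul0r addr0.
split; first by rewrite /uniform_seq divff ?pnatr_eq0 -?lt0n // mul1r addrC subrK.
move=> q _; rewrite lerD2l ler_wpM2r ?subr_ge0 // ler_pM2r ?invr_gt0 ?ltr0n //.
by rewrite ler_nat.
Qed.

Lemma subdivision_affine a b k t : a <= b -> subdivision 0 1 k t ->
  subdivision a b k (fun p => a + (b - a) * t p).
Proof.
move=> ab [t0 [tk tS]]; split; first by rewrite t0 mulr0 addr0.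
split; first by rewrite tk mulr1 addrC subrK.
by move=> p pk; rewrite lerD2l ler_wpM2l ?subr_ge0 ?tS.
Qed.

Lemma subdivision_drop a b k t j : subdivision a b k t -> (j <= k)%N ->
  subdivision (t j) b (k - j) (fun p => t (p + j)%N).
Proof.
move=> [_ [tk tS]] jk; split=> //; split; first by rewrite subnK.
by move=> p pk; rewrite addSn tS //; lia.
Qed.

Lemma subdivision_take a b k t j : subdivision a b k t -> (j <= k)%N ->
  subdivision a (t j) j t.
Proof. by move=> [t0 [_ tS]] jk; split=> //; split=> // p pj; apply: tS; lia. Qed.

Definition concat_seq k1 t1 t2 : nat -> R :=
  fun p => if (p <= k1)%N then t1 p else t2 (p - k1)%N.

Lemma concat_seq_left k1 t1 t2 p : (p <= k1)%N -> concat_seq k1 t1 t2 p = t1 p.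
Proof. by rewrite /concat_seq => ->. Qed.

Lemma concat_seq_right k1 t1 t2 p : t1 k1 = t2 0%N -> (k1 <= p)%N ->
  concat_seq k1 t1 t2 p = t2 (p - k1)%N.
Proof.
move=> e k1p; rewrite /concat_seq; case: leqP => // pk1.
have -> : p = k1 by apply/eqP; rewrite eqn_leq pk1 k1p.
by rewrite subnn.
Qed.

Lemma subdivision_concat a b c k1 k2 t1 t2 :
  subdivision a b k1 t1 -> subdivision b c k2 t2 ->
  subdivision a c (k1 + k2) (concat_seq k1 t1 t2).
Proof.
move=> [t10 [t1k t1S]] [t20 [t2k t2S]].
have e : t1 k1 = t2 0%N by rewrite t1k t20.
split; first by rewrite concat_seq_left.
split; first by rewrite concat_seq_right ?leq_addr // addKn.
move=> p pk; have [pk1|k1p] := ltnP p k1.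
  by rewrite !concat_seq_left ?t1S // ltnW.
by rewrite !concat_seq_right ?(leqW k1p) // subSn // t2S //; lia.
Qed.

End Subdivisions.

Section Continuity.
Context {R : realType} {V : normedModType R}.
Implicit Types g : R -> V.

Lemma within01P g : {within `[0, 1], continuous g} <->
  (forall x, 0 <= x <= 1 -> forall e, 0 < e -> exists2 d, 0 < d &
     forall s, 0 <= s <= 1 -> `|s - x| < d -> `|g s - g x| < e).
Proof.
rewrite subspace_continuousP; split=> [h x x01 e e0 | h x].
  have := h x; rewrite /= in_itv /= x01 => /(_ isT) /cvgrPdist_lt /(_ e e0).
  rewrite near_withinE => /nbhs_ballP [d /= d0 hd].
  exists d => // s s01 sx; rewrite distrC; apply: hd; last by rewrite /= in_itv /= s01.
  by rewrite /ball /= distrC.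
rewrite /= in_itv /= => x01; apply/cvgrPdist_lt => e e0.
have [d d0 hd] := h x x01 e e0.
rewrite near_withinE; apply/nbhs_ballP; exists d => //= s.
rewrite /ball /= in_itv /= => sx s01; rewrite distrC; apply: hd => //.
by rewrite distrC.
Qed.

Lemma within01_unif_continuous g : {within `[0, 1], continuous g} ->
  forall e, 0 < e -> exists2 h, 0 < h & forall s s', 0 <= s <= 1 -> 0 <= s' <= 1 ->
    `|s - s'| < h -> `|g s - g s'| < e.
Proof.
move=> /within01P gc e e0.
pose K : set R := `[0, 1]%classic.
pose P h x' := forall s, K s -> `|s - x'| < h -> `|g s - g x'| < e.
(* Heine-Cantor: a radius that works locally, made uniform by compactness. *)
have loc x : K x -> \forall x' \near x & h \near 0^'+, K x' -> P h x'.
  rewrite /K /= in_itv /= => x01.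
  have [d d0 hd] := gc x x01 (e / 2) (divr_gt0 e0 (ltr0Sn _ 1)).
  near=> x' h; rewrite /P /K /= => /[!in_itv] /= x'01 s /[!in_itv] /= s01 sx'.
  have hx : `|x' - x| < d / 2.
    near: x'; apply/nbhs_ballP; exists (d / 2) => /= [|y]; first by rewrite divr_gt0.
    by rewrite /ball /= distrC.
  have hp : 0 < h by near: h; exact: nbhs_right_gt.
  have hl : h < d / 2 by near: h; apply: nbhs_right_lt; rewrite divr_gt0.
  have h1 : `|g s - g x| < e / 2.
    apply: hd => //; rewrite (_ : s - x = (s - x') + (x' - x)); last by rewrite addrA subrK.
    by apply: le_lt_trans (ler_normD _ _) _; lra.
  have h2 : `|g x' - g x| < e / 2 by apply: hd => //; lra.
  rewrite (_ : g s - g x' = (g s - g x) - (g x' - g x)); last by rewrite opprB addrA subrK.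
  by apply: le_lt_trans (ler_normB _ _) _; lra.
have unif : \forall h \near 0^'+, K `<=` P h.
  have cK : compact K by exact: segment_compact.
  exact: (proj2 (near_covering_withinP K) (proj1 (compact_near_coveringP K) cK)).
have [h [Kh h0]] := filter_ex (filterI unif (nbhs_right_gt (0 : R))).
by exists h => // s s' s01 s'01 ss'; apply: Kh => //; rewrite /K /= in_itv.
Unshelve. all: by end_near.
Qed.

Lemma continuous_within_ball (A : set V) (g : V -> R) (y0 : V) :
  {within A, continuous g} -> A y0 ->
  forall eta, 0 < eta -> exists2 r, 0 < r &
    forall y, A y -> `|y - y0| < r -> `|g y - g y0| < eta.
Proof.
rewrite subspace_continuousP => gc Ay0 eta eta0.
have := gc y0 Ay0 => /cvgrPdist_lt /(_ eta eta0).
rewrite near_withinE => /nbhs_ballP [r /= r0 hr].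
exists r => // y Ay yr; rewrite distrC; apply: hr => //.
by rewrite -ball_normE /ball_ /= distrC.
Qed.

End Continuity.

Section PathLength.
Context {R : realType} {n : nat}.
Local Notation V := 'rV[R]_n.
Implicit Types (g : R -> V) (k : nat) (t : nat -> R).

Definition polygon_length g k t := \sum_(0 <= i < k) enorm (g (t i.+1) - g (t i)).

Lemma chord_le_polygon_length g k t :
  enorm (g (t k) - g (t 0%N)) <= polygon_length g k t.
Proof.
rewrite /polygon_length -(telescope_sumr (fun i => g (t i))) //; exact: enorm_sum.
Qed.

Lemma polygon_length_concat g k1 k2 t1 t2 : t1 k1 = t2 0%N ->
  polygon_length g (k1 + k2) (concat_seq k1 t1 t2) =
  polygon_length g k1 t1 + polygon_length g k2 t2.
Proof.
move=> e; rewrite /polygon_length (big_cat_nat _ (leq_addr k2 k1)) //=; congr (_ + _).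
  by apply: eq_big_nat => i /andP [_ ik]; rewrite !concat_seq_left // ltnW.
rewrite -{1}(add0n k1) big_addn addKn; apply: eq_big_nat => i _.
by rewrite !concat_seq_right ?leq_addl ?leqW ?leq_addl // -addSn !addnK.
Qed.

Lemma polygon_length_split g k t i j : (i <= j <= k)%N ->
  polygon_length g k t = polygon_length g i t +
    \sum_(i <= p < j) enorm (g (t p.+1) - g (t p)) +
    polygon_length g (k - j) (fun p => t (p + j)%N).
Proof.
move=> /andP [ij jk]; rewrite /polygon_length (big_cat_nat (n := j) (leq0n j) jk) /=.
rewrite (big_cat_nat (n := i) (leq0n i) ij) /=; congr (_ + _).
by rewrite -{1}(add0n j) big_addn.
Qed.

Lemma polygon_le_path_length g k t : subdivision 0 1 k t ->
  ((polygon_length g k t)%:E <= path_length g)%E.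
Proof.
by move=> ht; apply: ereal_sup_ubound; exists k, t; rewrite /polygon_length big_mkord.
Qed.

Lemma path_length_le g L :
  (forall k t, subdivision 0 1 k t -> polygon_length g k t <= L) ->
  (path_length g <= L%:E)%E.
Proof.
move=> h; apply: ge_ereal_sup => _ [k [t [ht ->]]].
by rewrite lee_fin; have := h k t ht; rewrite /polygon_length big_mkord.
Qed.

Lemma path_length_gt g l : (l%:E < path_length g)%E ->
  exists k t, subdivision 0 1 k t /\ l < polygon_length g k t.
Proof.
move=> /ereal_sup_gt [_ [k [t [ht ->]]]]; rewrite lte_fin => hl.
by exists k, t; split=> //; rewrite /polygon_length big_mkord.
Qed.

Lemma subdivision01_trivial : subdivision 0 1 1 (fun i : nat => i%:R : R).
Proof. by split=> //; split=> // -[|i] //= _; rewrite ler01. Qed.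

Lemma chord_le_path_length g : ((enorm (g 1 - g 0))%:E <= path_length g)%E.
Proof.
apply: le_trans (polygon_le_path_length g subdivision01_trivial).
by rewrite lee_fin /polygon_length big_nat1.
Qed.

Lemma path_length_ge0 g : (0 <= path_length g)%E.
Proof. by apply: le_trans (chord_le_path_length g); rewrite lee_fin enorm_ge0. Qed.

Lemma path_length_rev_le g : (path_length (fun s => g (1 - s)%R) <= path_length g)%E.
Proof.
apply: ge_ereal_sup => _ [k [t [ht ->]]].
have [t0 [tk tS]] := ht.
have hrev : subdivision 0 1 k (fun i => 1 - t (k - i)%N).
  split; first by rewrite subn0 tk subrr.
  split; first by rewrite subnn t0 subr0.
  by move=> i ik; rewrite lerD2l lerN2 (subdivision_le ht) // leq_sub2l //= leq_subr.
apply: le_trans (polygon_le_path_length _ hrev); rewrite lee_fin le_eqVlt; apply/orP; left.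
rewrite /polygon_length big_mkord [in X in _ == X](reindex_inj rev_ord_inj) /=.
apply/eqP/eq_bigr => i _; have ik := ltn_ord i.
rewrite -enormN opprB (_ : (k - (k - i.+1).+1 = i)%N); last by lia.
by rewrite (_ : (k - (k - i.+1) = i.+1)%N); last by lia.
Qed.

Lemma uniform_seq_small_chords g eta : {within `[0, 1], continuous g} -> 0 < eta ->
  exists2 M, (0 < M)%N & forall a b q, 0 <= a -> a <= b -> b <= 1 -> (q < M)%N ->
    enorm (g (uniform_seq a b M q.+1) - g (uniform_seq a b M q)) < eta.
Proof.
move=> gc eta0.
have c0 : 0 < Num.sqrt (n%:R : R) + 1 by rewrite ltr_pwDr ?sqrtr_ge0.
have [h h0 hh] := within01_unif_continuous gc (divr_gt0 eta0 c0).
pose M := (Num.trunc h^-1).+1.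
have M0 : (0 < M%:R :> R) by rewrite ltr0n.
have invM : M%:R^-1 < h.
  by rewrite -[h]invrK ltf_pV2 ?posrE ?invr_gt0 ?truncnS_gt.
exists M => // a b q a0 ab b1 qM.
have hu := subdivision_uniform ab (ltn0Sn _ : (0 < M)%N).
have /andP [? ?] := subdivision_bounds hu qM.
have /andP [? ?] := subdivision_bounds hu (ltnW qM).
have step : `|uniform_seq a b M q.+1 - uniform_seq a b M q| < h.
  have -> : uniform_seq a b M q.+1 - uniform_seq a b M q = (b - a) / M%:R.
    by rewrite /uniform_seq -natr1; field; rewrite gt_eqF.
  have Minv0 : 0 <= M%:R^-1 :> R by rewrite invr_ge0 ltW.
  rewrite normrM ger0_norm ?subr_ge0 // (ger0_norm Minv0).
  by apply: le_lt_trans invM; rewrite ler_piMl //; lra.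
have u1 : 0 <= uniform_seq a b M q.+1 <= 1 by apply/andP; lra.
have u0 : 0 <= uniform_seq a b M q <= 1 by apply/andP; lra.
have := hh _ _ u1 u0 step; rewrite ltr_pdivlMr // => lt.
apply: le_lt_trans (enorm_le_norm _) (le_lt_trans _ lt).
by rewrite mulrC ler_wpM2l ?normr_ge0 ?lerDl.
Qed.

Lemma subdivision_refine g k t eta :
  {within `[0, 1], continuous g} -> subdivision 0 1 k t -> 0 < eta ->
  exists K s, [/\ subdivision 0 1 K s, polygon_length g k t <= polygon_length g K s &
    forall p, (p < K)%N -> enorm (g (s p.+1) - g (s p)) < eta].
Proof.
move=> gc ht eta0; have [M M0 small] := uniform_seq_small_chords gc eta0.
suff /(_ k (leqnn k)) [K [s [hs hl hsm]]] : forall k', (k' <= k)%N -> exists K s,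
    [/\ subdivision 0 (t k') K s, polygon_length g k' t <= polygon_length g K s &
    forall p, (p < K)%N -> enorm (g (s p.+1) - g (s p)) < eta].
  by exists K, s; case: ht => _ [<- _].
elim=> [_|k' IH k'k].
  by exists 0%N, t; case: ht => t0 _; split=> //; rewrite /polygon_length !big_geq.
have [K [s [hs hl hsm]]] := IH (ltnW k'k).
have /andP [tk'0 _] := subdivision_bounds ht (ltnW k'k).
have /andP [_ tk'1] := subdivision_bounds ht k'k.
have tk'S : t k' <= t k'.+1 by case: ht => _ [_ ->].
pose u := uniform_seq (t k') (t k'.+1) M.
have hu : subdivision (t k') (t k'.+1) M u by exact: subdivision_uniform.
have [u0 [uM _]] := hu; have [_ [sK _]] := hs.
exists (K + M)%N, (concat_seq K s u); split.
- exact: subdivision_concat hs hu.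
- rewrite polygon_length_concat ?sK ?u0 // {1}/polygon_length big_nat_recr //= lerD //.
  by have := chord_le_polygon_length g M u; rewrite u0 uM.
- move=> p pK; have [pK1|Kp] := ltnP p K; first by rewrite !concat_seq_left ?hsm // ltnW.
  by rewrite !concat_seq_right ?sK ?u0 ?(leqW Kp) // subSn // small //; lia.
Qed.

End PathLength.

Section IntrinsicDistance.
Context {R : realType} {n : nat}.
Local Notation V := 'rV[R]_n.
Variable Om : set V.
Implicit Types (g : R -> V) (x y : V) (k : nat) (t : nat -> R).

Definition path_in x y g := {within `[0, 1], continuous g} /\
  g 0 = x /\ g 1 = y /\ (forall s, 0 <= s <= 1 -> closure Om (g s)).

Lemma idist_le_path_length x y g : path_in x y g -> (idist Om x y <= path_length g)%E.
Proof. by move=> h; apply: ereal_inf_lbound; exists g. Qed.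

Lemma idist_lt_path x y e : (idist Om x y < e)%E ->
  exists g, path_in x y g /\ (path_length g < e)%E.
Proof. by move=> /ereal_inf_lt [_ [g hg <-] h]; exists g. Qed.

Lemma normB_le_idist x y : (`|y - x|%:E <= idist Om x y)%E.
Proof.
apply: le_ereal_inf_tmp => _ [g [_ [g0 [g1 _]]] <-].
by apply: le_trans (chord_le_path_length g); rewrite lee_fin g0 g1 norm_le_enorm.
Qed.

Lemma path_in_rev x y g : path_in x y g -> path_in y x (fun s => g (1 - s)).
Proof.
move=> [/within01P gc [g0 [g1 gC]]]; split; last split; last split.
- apply/within01P => s s01 e e0.
  have [|d d0 hd] := gc (1 - s) _ e e0; first by apply/andP; lra.
  exists d => // s' s'01 s's; apply: hd; first by apply/andP; lra.
  by rewrite (_ : 1 - s' - (1 - s) = - (s' - s)) ?normrN //; ring.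
- by rewrite subr0.
- by rewrite subrr.
- by move=> s s01; apply: gC; apply/andP; lra.
Qed.

Lemma idist_sym x y : idist Om x y = idist Om y x.
Proof.
suff le x' y' : (idist Om y' x' <= idist Om x' y')%E by apply/le_anti; rewrite !le.
apply: le_ereal_inf_tmp => _ [g hg <-].
exact: le_trans (idist_le_path_length (path_in_rev hg)) (path_length_rev_le g).
Qed.

Lemma path_in_affine x y g a b : path_in x y g -> 0 <= a -> a <= b -> b <= 1 ->
  path_in (g a) (g b) (fun s => g (a + (b - a) * s)).
Proof.
move=> [/within01P gc [_ [_ gC]]] a0 ab b1.
have inr s : 0 <= s <= 1 -> 0 <= a + (b - a) * s <= 1.
  by move=> /andP [s0 s1]; apply/andP; nra.
split; last split; last split.
- apply/within01P => s s01 e e0.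
  have [d d0 hd] := gc _ (inr _ s01) e e0.
  have ba1 : 0 < b - a + 1 by lra.
  exists (d / (b - a + 1)); first by rewrite divr_gt0.
  move=> s' s'01 s's; apply: hd; first exact: inr.
  rewrite opprD addrACA subrr add0r -mulrBr normrM ger0_norm ?subr_ge0 //.
  apply: (le_lt_trans (y := (b - a) * (d / (b - a + 1)))).
    by rewrite ler_wpM2l ?subr_ge0 // ltW.
  by rewrite mulrA ltr_pdivrMr // mulrC ltr_pM2l //; lra.
- by rewrite mulr0 addr0.
- by rewrite mulr1 addrC subrK.
- by move=> s s01; apply/gC/inr.
Qed.

(* A subdivision of the subarc, completed by the points of [t] outside
   [t i, t j], is a subdivision of [0, 1]. *)
Lemma idist_subpath_le x y g L k t i j :
  path_in x y g -> (path_length g <= L%:E)%E -> subdivision 0 1 k t -> (i <= j <= k)%N ->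
  (idist Om (g (t i)) (g (t j)) <=
    (L - polygon_length g k t + \sum_(i <= p < j) enorm (g (t p.+1) - g (t p)))%:E)%E.
Proof.
move=> hg hL ht ijk; have /andP [ij jk] := ijk.
have /andP [ti0 _] := subdivision_bounds ht (leq_trans ij jk).
have tij : t i <= t j by rewrite (subdivision_le ht) ?ij.
have /andP [_ tj1] := subdivision_bounds ht jk.
apply: le_trans (idist_le_path_length (path_in_affine hg ti0 tij tj1)) _.
apply: path_length_le => k' q hq.
have hmid := subdivision_affine tij hq.
have hall := subdivision_concat (subdivision_take ht (leq_trans ij jk))
  (subdivision_concat hmid (subdivision_drop ht jk)).
have [mid0 [midk _]] := hmid.
have := polygon_le_path_length g hall.
rewrite !polygon_length_concat ?midk ?mid0 ?add0n // => /le_trans/(_ hL).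
rewrite lee_fin (polygon_length_split g t ijk) /=; lra.
Qed.

End IntrinsicDistance.

Section Chains.
Context {R : realType} {n : nat}.
Local Notation V := 'rV[R]_n.
Variables (Om S0 : set V) (e : R).

Fixpoint reach (m : nat) (x : V) : Prop :=
  if m is m'.+1 then exists z, [/\ reach m' z, closure Om x & (idist Om z x < e%:E)%E]
  else S0 x.

Lemma reach_closure m x : S0 `<=` closure Om -> reach m x -> closure Om x.
Proof. by case: m => [|m] S0cl /=; [exact: S0cl | case=> z []]. Qed.

(* Walk along the points z_0, ..., z_K and step to z_j as soon as the length
   accumulated since the last step reaches e/2. *)
Lemma reach_greedy (z : nat -> V) (a : nat -> R) K : 0 < e -> S0 (z 0%N) ->
  (forall q, (q <= K)%N -> closure Om (z q)) ->
  (forall q, (q < K)%N -> 0 <= a q < e / 4) ->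
  (forall i j, (i <= j <= K)%N ->
     (idist Om (z i) (z j) < (e / 4 + \sum_(i <= q < j) a q)%:E)%E) ->
  exists m, reach m.+1 (z K) /\ m%:R * e <= 4 * \sum_(0 <= q < K) a q.
Proof.
move=> e0 z0 zcl ha hz.
have scan j : (j <= K)%N -> exists i c, [/\ (i <= j)%N, reach c (z i),
    c%:R * e <= 4 * \sum_(0 <= q < i) a q & \sum_(i <= q < j) a q < e / 2].
  elim: j => [_|j IH jK].
    by exists 0%N, 0%N; rewrite mul0r !big_geq // mulr0; split=> //; lra.
  have [i [c [ij hc hci hblk]]] := IH (ltnW jK).
  have /andP [aj0 aje] := ha j jK.
  have [hb|] := ltP (\sum_(i <= q < j.+1) a q) (e / 2).
    by exists i, c; split=> //; exact: leqW.
  rewrite big_nat_recr //= => hb.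
  exists j, c.+1; split=> //.
  - exists (z i); split=> //; first exact/zcl/ltnW.
    apply: lt_le_trans (hz i j _) _; first by rewrite ij ltnW.
    by rewrite lee_fin; lra.
  - by rewrite (big_cat_nat (n := i) (leq0n i) ij) /= -natr1; lra.
  - by rewrite big_nat1; lra.
have [i [c [iK hc hci hblk]]] := scan K (leqnn K).
exists c; split.
  exists (z i); split=> //; first exact: zcl.
  apply: lt_le_trans (hz i K _) _; first by rewrite iK leqnn.
  by rewrite lee_fin; lra.
apply: le_trans hci _; rewrite ler_pM2l // (big_cat_nat (n := i) (leq0n i) iK) /= lerDl.
by rewrite big_nat_cond; apply: sumr_ge0 => q /andP [/andP [_ /ha /andP []]].
Qed.

Lemma reach_of_idist_lt p x L : 0 < e -> S0 p -> (idist Om p x < L%:E)%E ->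
  exists m, reach m x /\ m%:R * e <= 4 * L + e.
Proof.
move=> e0 Sp /idist_lt_path [g [hg gL]].
have [gc [g0 [g1 gC]]] := hg.
have [r gr] : exists r, path_length g = r%:E.
  by move: gL (path_length_ge0 g); case: (path_length g) => [r _ _| //| //]; exists r.
have e4 : 0 < e / 4 by rewrite divr_gt0.
have /path_length_gt [k [t [ht hkt]]] : ((r - e / 4)%:E < path_length g)%E.
  by rewrite gr lte_fin; lra.
have [K [s [hs hts hsmall]]] := subdivision_refine gc ht e4.
have [s0 [sK _]] := hs.
have hsr : polygon_length g K s <= r by rewrite -lee_fin -gr polygon_le_path_length.
have [m [hm hme]] : exists m, reach m.+1 (g (s K)) /\ m%:R * e <= 4 * polygon_length g K s.
  apply: (reach_greedy (z := fun q => g (s q)) (a := fun q => enorm (g (s q.+1) - g (s q)))).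
  - exact: e0.
  - by rewrite s0 g0.
  - by move=> q qK; apply/gC/(subdivision_bounds hs qK).
  - by move=> q qK; rewrite enorm_ge0 hsmall.
  - move=> i j hij; apply: le_lt_trans (idist_subpath_le hg _ hs hij) _.
      by rewrite gr.
    by rewrite lte_fin; lra.
exists m.+1; split; first by rewrite -g1 -sK.
have : r < L by rewrite -lte_fin -gr.
by rewrite -natr1; lra.
Qed.

End Chains.

Section DynamicProgramming.
Context {R : realType} {T : Type}.
Implicit Types (B : set T) (c : R) (u v : T -> R) (x : T).

(* [inf_B u + sup_B u - 2 u x >= - c], stated without inf and sup *)
Definition dpp_sub B c u x := forall y1 S, B y1 -> (forall y, B y -> u y <= S) ->
  - c <= u y1 + S - 2 * u x.

Definition dpp_strict_super B c v x := exists y1 S,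
  [/\ B y1, (forall y, B y -> v y <= S) & v y1 + S - 2 * v x <= - c].

Lemma dpp_sub_of_inf_sup B c u x : has_lbound (u @` B) ->
  - c <= inf (u @` B) + sup (u @` B) - 2 * u x -> dpp_sub B c u x.
Proof.
move=> lbB hx y1 S By1 hS.
have h1 : inf (u @` B) <= u y1 by apply: ge_inf => //; exists y1.
have h2 : sup (u @` B) <= S.
  by apply: ge_sup; [exists (u y1), y1 | move=> _ [y By <-]; exact: hS].
lra.
Qed.

Lemma dpp_sub_opp_of_inf_sup B c u x : has_ubound (u @` B) ->
  inf (u @` B) + sup (u @` B) - 2 * u x <= c -> dpp_sub B c (fun y => - u y) x.
Proof.
move=> ubB hx y1 S By1 hS.
have h1 : u y1 <= sup (u @` B) by apply: ub_le_sup => //; exists y1.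
have h2 : - S <= inf (u @` B).
  apply: lb_le_inf; first by exists (u y1), y1.
  by move=> _ [y By <-]; rewrite lerNl hS.
lra.
Qed.

(* At a point where u - v nearly attains its positive supremum, the
   subsolution inequality for u contradicts the strict supersolution
   inequality for v. *)
Lemma dpp_comparison (Cl Om : set T) (B : T -> set T) u v c0 c :
  c0 < c -> Om `<=` Cl -> (forall x, Om x -> B x `<=` Cl) ->
  (exists M, forall x, Cl x -> u x - v x <= M) ->
  (forall x, Cl x -> ~ Om x -> u x <= v x) ->
  (forall x, Om x -> dpp_sub (B x) c0 u x) ->
  (forall x, Om x -> v x < u x -> dpp_strict_super (B x) c v x) ->
  forall x, Cl x -> u x <= v x.
Proof.
move=> cc OmCl BCl [M0 hM0] hbd hsub hsuper x0 Cx0.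
rewrite leNgt; apply/negP => hx0.
pose E := [set u x - v x | x in Cl].
have hE : has_sup E.
  by split; [exists (u x0 - v x0), x0 | exists M0 => _ [x Cx <-]; exact: hM0].
have hup x : Cl x -> u x - v x <= sup E by move=> Cx; apply: (ub_le_sup hE.2); exists x.
have Mpos : 0 < sup E by have := hup x0 Cx0; lra.
pose tau := Num.min (sup E) (c - c0) / 4.
have tau0 : 0 < tau by rewrite divr_gt0 // lt_min Mpos subr_gt0 cc.
have tauM : tau <= sup E / 4 by rewrite ler_pM2r // ge_min lexx.
have tauc : tau <= (c - c0) / 4 by rewrite ler_pM2r // ge_min lexx orbT.
have [_ [x Cx <-] hx] := sup_adherent tau0 hE.
have vux : v x < u x by lra.
have Ox : Om x by apply: contrapT => /(hbd x Cx); lra.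
have [y1 [S [By1 hS hv]]] := hsuper x Ox vux.
have hB y : B x y -> u y <= S + sup E.
  by move=> By; have := hup y (BCl x Ox y By); have := hS y By; lra.
have := hsub x Ox y1 (S + sup E) By1 hB.
have := hup y1 (BCl x Ox y1 By1).
lra.
Qed.

End DynamicProgramming.

Section Parabola.
Context {R : realType}.
Implicit Types b tp s d t : R.

Definition parab b tp t := b * tp * t - b * t ^+ 2 / 2.

Definition parab_cut b tp t := parab b tp (Num.min t tp).

Lemma ler_parab b tp t1 t2 : 0 < b -> t1 <= t2 -> t2 <= tp ->
  parab b tp t1 <= parab b tp t2.
Proof.
move=> b0 h1 h2; rewrite -subr_ge0.
have -> : parab b tp t2 - parab b tp t1 = b * ((t2 - t1) * (tp - (t1 + t2) / 2)).
  by rewrite /parab; ring.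
by apply: mulr_ge0; [exact: ltW | apply: mulr_ge0; lra].
Qed.

Lemma parab_le_top b tp t : 0 < b -> parab b tp t <= parab b tp tp.
Proof.
move=> b0; rewrite -subr_ge0.
have -> : parab b tp tp - parab b tp t = b * ((tp - t) ^+ 2 / 2) by rewrite /parab; field.
by apply: mulr_ge0; [exact: ltW | rewrite divr_ge0 ?sqr_ge0].
Qed.

Lemma parab_ge0 b tp t : 0 < b -> 0 <= t -> t <= tp -> 0 <= parab b tp t.
Proof.
move=> b0 t0 ttp; have := ler_parab b0 t0 ttp.
by rewrite /parab !(mulr0, expr0n, mul0r) subr0.
Qed.

Lemma parab_le_lin b tp t : 0 < b -> parab b tp t <= b * tp * t.
Proof.
move=> b0; rewrite /parab lerBlDr lerDl; apply: divr_ge0 => //.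
exact: mulr_ge0 (ltW b0) (sqr_ge0 t).
Qed.

Lemma parab_cutE b tp t : t <= tp -> parab_cut b tp t = parab b tp t.
Proof. by move=> h; rewrite /parab_cut min_l. Qed.

Lemma ler_parab_cut b tp t1 t2 : 0 < b -> t1 <= t2 ->
  parab_cut b tp t1 <= parab_cut b tp t2.
Proof.
move=> b0 h; rewrite /parab_cut; apply: ler_parab => //; last by rewrite ge_min lexx orbT.
by rewrite le_min !ge_min h lexx !orbT.
Qed.

Lemma parab_cut_ge0 b tp t : 0 < b -> 0 <= tp -> 0 <= t -> 0 <= parab_cut b tp t.
Proof.
by move=> b0 tp0 t0; apply: parab_ge0; rewrite ?le_min ?t0 ?tp0 // ge_min lexx orbT.
Qed.

Lemma parab_cut_le_top b tp t : 0 < b -> parab_cut b tp t <= parab b tp tp.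
Proof. exact: parab_le_top. Qed.

Lemma parab_cut_le_lin b tp t : 0 < b -> 0 <= tp -> 0 <= t ->
  parab_cut b tp t <= b * tp * t.
Proof.
move=> b0 tp0 t0; apply: le_trans (parab_le_lin _ _ b0) _.
by rewrite ler_wpM2l ?mulr_ge0 ?ge_min ?lexx // ltW.
Qed.

Lemma parab_cut_second_diff b tp s d : 0 <= s - d -> s + d <= tp -> 0 <= d ->
  parab_cut b tp (s - d) + parab_cut b tp (s + d) - 2 * parab_cut b tp s = - (b * d ^+ 2).
Proof. by move=> *; rewrite !parab_cutE /parab; [field | lra | lra | lra]. Qed.

End Parabola.

Section Barrier.
Context {R : realType} {n : nat}.
Local Notation V := 'rV[R]_n.
Variables (Om S0 : set V) (e : R).
Implicit Types (x y : V) (b tp base : R).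

Definition reachable x := exists m, reach Om S0 e m x.

Lemma reachable_asbool x : reachable x -> exists m, `[< reach Om S0 e m x >].
Proof. by move=> [m hm]; exists m; apply/asboolP. Qed.

Definition nsteps x : nat :=
  if pselect (reachable x) is left h then ex_minn (reachable_asbool h) else 0.

Lemma nstepsP x : reachable x ->
  reach Om S0 e (nsteps x) x /\ forall m, reach Om S0 e m x -> (nsteps x <= m)%N.
Proof.
rewrite /nsteps; case: pselect => // h _; case: ex_minnP => m /asboolP hm hmin.
by split=> // m' hm'; apply/hmin/asboolP.
Qed.

Definition barrier b tp base x : R := base +
  if `[< reachable x >] then parab_cut b tp (e * (nsteps x)%:R) else parab b tp tp.

Hypotheses (e0 : 0 < e) (S0cl : S0 `<=` closure Om) (S0Om : forall y, S0 y -> ~ Om y).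

Lemma barrier_ge_base b tp base x : 0 < b -> 0 <= tp -> base <= barrier b tp base x.
Proof.
move=> b0 tp0; rewrite /barrier lerDl; case: ifP => _; last exact: parab_ge0.
by apply: parab_cut_ge0 => //; exact: mulr_ge0 (ltW e0) (ler0n _ _).
Qed.

Lemma barrier_le_top b tp base x : 0 < b -> 0 <= tp ->
  barrier b tp base x <= base + parab b tp tp.
Proof.
by move=> b0 tp0; rewrite /barrier lerD2l; case: ifP => _ //; exact: parab_cut_le_top.
Qed.

Lemma barrierE b tp base x : reachable x ->
  barrier b tp base x = base + parab_cut b tp (e * (nsteps x)%:R).
Proof. by move=> h; rewrite /barrier (asboolT h). Qed.

Lemma barrier_le_reach b tp base m x : 0 < b -> 0 <= tp -> reach Om S0 e m x ->
  barrier b tp base x <= base + parab_cut b tp (e * m%:R).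
Proof.
move=> b0 tp0 hm; have rx : reachable x by exists m.
rewrite barrierE // lerD2l; apply: ler_parab_cut => //.
by rewrite ler_pM2l // ler_nat; apply: (nstepsP rx).2.
Qed.

(* The step count grows by at most one across a ball of radius e, so along the
   predecessor z of x the concave profile gives a second difference -b e^2. *)
Lemma barrier_strict_super b tp base x : 0 < b -> 0 <= tp -> Om x -> reachable x ->
  e * ((nsteps x)%:R + 1) <= tp ->
  dpp_strict_super (iball Om x e) (b * e ^+ 2) (barrier b tp base) x.
Proof.
move=> b0 tp0 Ox rx htp; have [rnx _] := nstepsP rx.
case Enx : (nsteps x) => [|m]; first by move: rnx; rewrite Enx => rx0; case: (S0Om rx0 Ox).
rewrite Enx in rnx htp; have [z [rz _ zx]] := rnx.
exists z, (base + parab_cut b tp (e * m.+2%:R)); split.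
- by split; [exact: reach_closure rz | rewrite idist_sym].
- move=> y [cly xy]; apply: barrier_le_reach => //.
  by exists x; split.
have hz := barrier_le_reach base b0 tp0 rz.
have sd : parab_cut b tp (e * m%:R) + parab_cut b tp (e * m.+2%:R) -
    2 * parab_cut b tp (e * m.+1%:R) = - (b * e ^+ 2).
  have h1 : 0 <= e * m.+1%:R - e.
    by rewrite -natr1 mulrDr mulr1 addrK; exact: mulr_ge0 (ltW e0) (ler0n _ _).
  have h2 : e * m.+1%:R + e <= tp by move: htp; rewrite mulrDr mulr1.
  rewrite -(parab_cut_second_diff b h1 h2 (ltW e0)).
  by congr (parab_cut _ _ _ + parab_cut _ _ _ - _); rewrite -!natr1; ring.
by rewrite (barrierE b tp base rx) Enx; lra.
Qed.

End Barrier.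

Section Estimates.
Context {R : realType} {n : nat}.
Local Notation V := 'rV[R]_n.
Variable Om : set V.
Hypothesis oOm : open Om.
Implicit Types (x y : V) (u : V -> R).

Definition dpp_subsolution e c u := forall x, Om x -> dpp_sub (iball Om x e) c u x.

Lemma bdryP y : bdry Om y <-> closure Om y /\ ~ Om y.
Proof. by rewrite /bdry (proj1 (interior_id Om) oOm). Qed.

Lemma width_lt_bdry : (width Om < +oo)%E ->
  exists2 W, 0 <= W & forall x, Om x -> exists y, bdry Om y /\ (idist Om y x < W%:E)%E.
Proof.
move=> hwid; have [w hw] : exists w : R, (width Om <= w%:E)%E.
  by move: hwid; case: (width Om) => [w _|//|_];
    [exists w | exists 0%R]; rewrite ?lexx ?leNye.
exists (`|w| + 1) => [|x Ox]; first by have := normr_ge0 w; lra.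
have : (ereal_inf [set idist Om y x | y in bdry Om] < (`|w| + 1)%:E)%E.
  apply: (le_lt_trans (y := width Om)); first by apply: ereal_sup_ubound; exists x.
  by apply: le_lt_trans hw _; rewrite lte_fin; have := ler_norm w; lra.
by move=> /ereal_inf_lt [_ [y yb <-] hy]; exists y.
Qed.

Lemma solution_dpp_sub e Mf u (f : V -> R) :
  (exists M, forall x, closure Om x -> `|u x| <= M) ->
  (forall x, Om x -> `|f x| <= Mf) ->
  (forall x, Om x -> eps_lap Om e u x = e ^+ 2 * f x) ->
  dpp_subsolution e (e ^+ 2 * Mf) u /\
  dpp_subsolution e (e ^+ 2 * Mf) (fun x => - u x).
Proof.
move=> [M hM] hf hlap.
have lb x : has_lbound (u @` iball Om x e).
  by exists (- M) => _ [y [cy _] <-]; have := hM y cy; rewrite ler_norml => /andP [].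
have ub x : has_ubound (u @` iball Om x e).
  by exists M => _ [y [cy _] <-]; have := hM y cy; rewrite ler_norml => /andP [].
have lapx x : Om x -> `|eps_lap Om e u x| <= e ^+ 2 * Mf.
  by move=> Ox; rewrite hlap // normrM ger0_norm ?sqr_ge0 // ler_wpM2l ?sqr_ge0 ?hf.
split=> x Ox; have := lapx x Ox; rewrite ler_norml => /andP [lo hi].
  exact: dpp_sub_of_inf_sup (lb x) lo.
exact: dpp_sub_opp_of_inf_sup (ub x) hi.
Qed.

Lemma reach_dist_le y0 e m y : reach Om [set y0] e m y -> `|y - y0| <= m%:R * e.
Proof.
elim: m y => [y /= ->|m IH y [z [rz _ zy]]]; first by rewrite subrr normr0 mul0r.
have yz : `|y - z| < e by rewrite -lte_fin; exact: le_lt_trans (normB_le_idist _ _ _) zy.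
rewrite -(subrK z y) -addrA -natr1 mulrDl mul1r.
by rewrite [X in _ <= X]addrC; exact: le_trans (ler_normD _ _) (lerD (ltW yz) (IH z rz)).
Qed.

Lemma dpp_sub_le_barrier S0 e Mf tp base u :
  0 < e -> 0 <= Mf -> 0 <= tp -> S0 `<=` bdry Om ->
  (exists M, forall x, closure Om x -> u x <= M) ->
  dpp_subsolution e (e ^+ 2 * Mf) u ->
  (forall y, bdry Om y -> u y <= barrier Om S0 e (Mf + 1) tp base y) ->
  (forall x, Om x -> barrier Om S0 e (Mf + 1) tp base x < u x ->
     reachable Om S0 e x /\ e * ((nsteps Om S0 e x)%:R + 1) <= tp) ->
  forall x, closure Om x -> u x <= barrier Om S0 e (Mf + 1) tp base x.
Proof.
move=> e0 Mf0 tp0 S0b [M hM] hsub hbdry hsuper.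
have b0 : 0 < Mf + 1 by lra.
have S0cl : S0 `<=` closure Om by move=> y /S0b /bdryP [].
have S0Om y : S0 y -> ~ Om y by move=> /S0b /bdryP [].
apply: (dpp_comparison (Cl := closure Om) (Om := Om) (B := fun x => iball Om x e)
  (c0 := e ^+ 2 * Mf) (c := (Mf + 1) * e ^+ 2)) => //.
- by rewrite mulrC ltr_pM2r ?exprn_gt0 //; lra.
- exact: subset_closure.
- by move=> x _ y [].
- exists (M - base) => x cx; have := hM x cx.
  by have := barrier_ge_base Om S0 e0 base x b0 tp0; lra.
- by move=> x cx nO; apply/hbdry/bdryP.
- by move=> x Ox /(hsuper x Ox) [rx htp]; exact: barrier_strict_super.
Qed.

Lemma dpp_sub_global_bound e Mf W G u :
  0 < e -> e <= 1 -> 0 <= Mf -> 0 <= W ->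
  (forall x, Om x -> exists y, bdry Om y /\ (idist Om y x < W%:E)%E) ->
  (exists M, forall x, closure Om x -> u x <= M) ->
  (forall y, bdry Om y -> u y <= G) ->
  dpp_subsolution e (e ^+ 2 * Mf) u ->
  forall x, closure Om x -> u x <= G + parab (Mf + 1) (4 * W + 4) (4 * W + 4).
Proof.
move=> e0 e1 Mf0 W0 hW ubd hG hsub x cx.
have b0 : 0 < Mf + 1 by lra.
have tp0 : 0 <= 4 * W + 4 by lra.
apply: le_trans (barrier_le_top Om (bdry Om) e G x b0 tp0).
apply: (dpp_sub_le_barrier (S0 := bdry Om)) => // [y yb|z Oz _].
  exact: le_trans (hG y yb) (barrier_ge_base _ _ e0 _ _ b0 tp0).
have [y [yb hy]] := hW z Oz.
have [m [rm hm]] := reach_of_idist_lt e0 yb hy.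
have rz : reachable Om (bdry Om) e z by exists m.
split=> //; have := (nstepsP rz).2 m rm; rewrite -(ler_nat R) => hmm.
have : e * (nsteps Om (bdry Om) e z)%:R <= e * m%:R by rewrite ler_pM2l.
by rewrite mulrC in hm; lra.
Qed.

Lemma dpp_sub_local_bound e Mf G U r eta tp y0 u :
  0 < e -> e <= 1 -> 0 <= Mf -> 0 <= eta -> 1 <= tp -> bdry Om y0 ->
  (forall y, bdry Om y -> u y <= G) -> - G <= u y0 ->
  (forall y, bdry Om y -> `|y - y0| < r -> u y <= u y0 + eta) ->
  (forall x, closure Om x -> u x <= U) ->
  dpp_subsolution e (e ^+ 2 * Mf) u ->
  U - (u y0 + eta) <= parab (Mf + 1) tp (tp - 1) ->
  2 * G <= parab (Mf + 1) tp (Num.min r tp) ->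
  forall x m, Om x -> reach Om [set y0] e m x ->
    u x <= u y0 + eta + (Mf + 1) * tp * (e * m%:R).
Proof.
move=> e0 e1 Mf0 eta0 tp1 y0b hG hGy0 hnear hU hsub hUtp hGr.
set b := Mf + 1 in hUtp hGr *; set base := u y0 + eta in hUtp *.
have b0 : 0 < b by rewrite /b; lra.
have tp0 : 0 <= tp by lra.
have hGtop : 2 * G <= parab b tp tp by apply: le_trans hGr (parab_le_top _ _ b0).
have hUtop : U - base <= parab b tp tp by apply: le_trans hUtp (parab_le_top _ _ b0).
suff le_bar : forall x, closure Om x -> u x <= barrier Om [set y0] e b tp base x.
  move=> x m Ox rm; apply: le_trans (le_bar x (subset_closure Ox)) _.
  apply: le_trans (barrier_le_reach e0 base b0 tp0 rm) _; rewrite lerD2l.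
  by apply: parab_cut_le_lin => //; exact: mulr_ge0 (ltW e0) (ler0n _ _).
apply: dpp_sub_le_barrier => //; first by move=> y ->.
- by exists U.
- move=> y yb; have := hG y yb.
  have [ry|nry] := pselect (reachable Om [set y0] e y); last first.
    by rewrite /barrier (asboolF nry) /base; lra.
  rewrite barrierE //; have [rny _] := nstepsP ry.
  have [yr|ry0] := ltP `|y - y0| r.
    have := hnear y yb yr.
    have := parab_cut_ge0 b0 tp0 (mulr_ge0 (ltW e0) (ler0n _ (nsteps Om [set y0] e y))).
    by rewrite /base; lra.
  have : parab_cut b tp r <= parab_cut b tp (e * (nsteps Om [set y0] e y)%:R).
    by apply: ler_parab_cut b0 _; rewrite mulrC; apply: le_trans (reach_dist_le rny).
  by rewrite /parab_cut /base; lra.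
- move=> x Ox hbu; have hbU : barrier Om [set y0] e b tp base x < U.
    exact: lt_le_trans hbu (hU x (subset_closure Ox)).
  have [rx|nrx] := pselect (reachable Om [set y0] e x); last first.
    by move: hbU; rewrite /barrier (asboolF nrx); lra.
  split=> //; move: hbU; rewrite barrierE //.
  set s := e * (nsteps Om [set y0] e x)%:R => hbU.
  have [stp|] := ltP s (tp - 1); first by rewrite mulrDr mulr1 -/s; lra.
  move=> /(ler_parab_cut tp b0); rewrite parab_cutE; lra.
Qed.

Lemma dpp_sub_upper_estimate Mf G W r eta y0 :
  0 <= Mf -> 0 <= G -> 0 <= W -> 0 < r -> 0 <= eta -> bdry Om y0 ->
  (forall x, Om x -> exists y, bdry Om y /\ (idist Om y x < W%:E)%E) ->
  exists2 C, 0 < C & forall e u, 0 < e -> e <= 1 ->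
    (exists M, forall x, closure Om x -> u x <= M) ->
    (forall y, bdry Om y -> `|u y| <= G) ->
    (forall y, bdry Om y -> `|y - y0| < r -> u y <= u y0 + eta) ->
    dpp_subsolution e (e ^+ 2 * Mf) u ->
    forall x L, Om x -> (idist Om y0 x < L%:E)%E -> u x <= u y0 + eta + C * (L + e).
Proof.
move=> Mf0 G0 W0 r0 eta0 y0b hW.
(* U bounds u globally; since b D r' = U + 2 G, the profile with top at 1 + D
   exceeds U + G at D and 2 G at r' <= r. *)
set b := Mf + 1; set U := G + parab b (4 * W + 4) (4 * W + 4).
set r' := Num.min r 1; set D := (U + 2 * G) / (b * r').
have b0 : 0 < b by rewrite /b; lra.
have r'0 : 0 < r' by rewrite lt_min r0 ltr01.
have r'1 : r' <= 1 by rewrite ge_min lexx orbT.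
have GU : G <= U by rewrite /U lerDl parab_ge0 //; lra.
have D0 : 0 <= D by apply: divr_ge0; [lra | apply: mulr_ge0; exact: ltW].
have bDr' : b * D * r' = U + 2 * G by rewrite /D; field; rewrite ?gt_eqF.
have hUtp : U + G <= parab b (1 + D) (1 + D - 1).
  have bD0 : 0 <= b * D by apply: mulr_ge0; [exact: ltW | exact: D0].
  have : 0 <= b * D * (1 - r') by apply: mulr_ge0 => //; lra.
  have : 0 <= b * D ^+ 2 by apply: mulr_ge0; [exact: ltW | exact: sqr_ge0].
  by rewrite /parab (addrC 1 D) addrK; nra.
have hGr : 2 * G <= parab b (1 + D) (Num.min r (1 + D)).
  have r'm : r' <= Num.min r (1 + D).
    by rewrite le_min !ge_min lexx lerDl D0 !orbT.
  have mtp : Num.min r (1 + D) <= 1 + D by rewrite ge_min lexx orbT.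
  apply: le_trans (ler_parab b0 r'm mtp).
  have : 0 <= b * r' * (1 - r' / 2).
    by apply: mulr_ge0; [apply: mulr_ge0; exact: ltW | lra].
  by rewrite /parab; nra.
exists (4 * b * (1 + D)); first by rewrite !mulr_gt0 //; lra.
move=> e u e0 e1 ubd hGu hnear hsub x L Ox hL.
have hG y : bdry Om y -> u y <= G by move=> /hGu; rewrite ler_norml => /andP [].
have hGy0 : - G <= u y0 by have := hGu y0 y0b; rewrite ler_norml => /andP [].
have hU := dpp_sub_global_bound e0 e1 Mf0 W0 hW ubd hG hsub.
have [m [rm hm]] := reach_of_idist_lt e0 (erefl y0 : [set y0] y0) hL.
have tp1 : 1 <= 1 + D by lra.
have hUb : U - (u y0 + eta) <= parab b (1 + D) (1 + D - 1) by lra.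
have := dpp_sub_local_bound e0 e1 Mf0 eta0 tp1 y0b hG hGy0 hnear hU hsub hUb hGr Ox rm.
have : b * (1 + D) * (e * m%:R) <= b * (1 + D) * (4 * (L + e)).
  by rewrite ler_wpM2l ?mulr_ge0 //; lra.
rewrite -/b; lra.
Qed.

Lemma dpp_solution_estimate Mf G W r eta y0 :
  0 <= Mf -> 0 <= G -> 0 <= W -> 0 < r -> 0 <= eta -> bdry Om y0 ->
  (forall x, Om x -> exists y, bdry Om y /\ (idist Om y x < W%:E)%E) ->
  exists2 C, 0 < C & forall e u, 0 < e -> e <= 1 ->
    (exists M, forall x, closure Om x -> `|u x| <= M) ->
    (forall y, bdry Om y -> `|u y| <= G) ->
    (forall y, bdry Om y -> `|y - y0| < r -> `|u y - u y0| <= eta) ->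
    dpp_subsolution e (e ^+ 2 * Mf) u ->
    dpp_subsolution e (e ^+ 2 * Mf) (fun x => - u x) ->
    forall x L, Om x -> (idist Om y0 x < L%:E)%E -> `|u x - u y0| <= eta + C * (L + e).
Proof.
move=> Mf0 G0 W0 r0 eta0 y0b hW.
have [C C0 est] := dpp_sub_upper_estimate Mf0 G0 W0 r0 eta0 y0b hW.
exists C => // e u e0 e1 [M hM] hG hnear hsub hsubN x L Ox hL.
have ub : exists M, forall x, closure Om x -> u x <= M.
  by exists M => z cz; apply: le_trans (ler_norm _) (hM z cz).
have ubN : exists M, forall x, closure Om x -> - u x <= M.
  by exists M => z cz; have := hM z cz; rewrite -normrN; exact: le_trans (ler_norm _).
have hGN y : bdry Om y -> `|- u y| <= G by rewrite normrN; exact: hG.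
have near y : bdry Om y -> `|y - y0| < r -> u y <= u y0 + eta.
  by move=> yb yr; have := hnear y yb yr; rewrite ler_norml => /andP [_]; lra.
have nearN y : bdry Om y -> `|y - y0| < r -> - u y <= - u y0 + eta.
  by move=> yb yr; have := hnear y yb yr; rewrite ler_norml => /andP [+ _]; lra.
have := est e u e0 e1 ub hG near hsub x L Ox hL.
have := est e (fun x => - u x) e0 e1 ubN hGN nearN hsubN x L Ox hL.
by rewrite ler_norml => *; apply/andP; split; lra.
Qed.

End Estimates.

Theorem lemma5p4 (R : realType) (n : nat) (Om : set 'rV[R]_n)
  (f : 'rV[R]_n -> R) (g : 'rV[R]_n -> R) (eps : nat -> R)
  (u : nat -> 'rV[R]_n -> R) :
  domain Om ->
  (width Om < +oo)%E ->
  (exists M : R, forall x, Om x -> `|f x| <= M) ->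
  {within bdry Om, continuous g} ->
  (exists M : R, forall y, bdry Om y -> `|g y| <= M) ->
  (forall i, 0 < eps i) ->
  eps @ \oo --> (0 : R) ->
  (forall i, exists M : R, forall x, closure Om x -> `|u i x| <= M) ->
  (forall i x, Om x -> eps_lap Om (eps i) (u i) x = eps i ^+ 2 * f x) ->
  (forall i y, bdry Om y -> u i y = g y) ->
  forall y0, bdry Om y0 ->
  forall e : R, 0 < e ->
  exists delta : R, 0 < delta /\ exists N : nat,
    forall x, Om x -> (idist Om y0 x <= delta%:E)%E ->
    forall i, (N < i)%N -> `|u i x - g y0| <= e.
Proof.
move=> [[x0 Ox0] [oOm _]] /width_lt_bdry [W W0 hW] [Mf hf] gc [G hg] eps0 eps_cvg
  ubd sol bc y0 y0b e e0.
have Mf0 : 0 <= Mf := le_trans (normr_ge0 _) (hf x0 Ox0).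
have G0 : 0 <= G := le_trans (normr_ge0 _) (hg y0 y0b).
have e2 : 0 < e / 2 by rewrite divr_gt0.
have [r r0 hr] := continuous_within_ball gc y0b e2.
have [C C0 est] := dpp_solution_estimate oOm Mf0 G0 W0 r0 (ltW e2) y0b hW.
pose delta := e / (8 * C).
have delta0 : 0 < delta by rewrite divr_gt0 ?mulr_gt0.
have dmin : 0 < Num.min 1 delta by rewrite lt_min ltr01.
move/cvgrPdist_lt/(_ _ dmin): eps_cvg => [N _ hN].
exists delta; split=> //; exists N => x Ox hx i /ltnW /hN; rewrite sub0r normrN.
rewrite (gtr0_norm (eps0 i)) lt_min => /andP [eps1 epsd].
have [hsub hsubN] := solution_dpp_sub (ubd i) hf (sol i).
have hL : (idist Om y0 x < (2 * delta)%:E)%E by apply: le_lt_trans hx _; rewrite lte_fin; lra.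
have hG y : bdry Om y -> `|u i y| <= G by move=> yb; rewrite bc // hg.
have hnear y : bdry Om y -> `|y - y0| < r -> `|u i y - u i y0| <= e / 2.
  by move=> yb yr; rewrite !bc //; exact/ltW/hr.
have Cdelta : C * delta = e / 8 by rewrite /delta; field; rewrite gt_eqF.
have : C * (2 * delta + eps i) <= C * (3 * delta) by rewrite ler_pM2l //; lra.
rewrite -(bc i y0 y0b).
by have := est _ _ (eps0 i) (ltW eps1) (ubd i) hG hnear hsub hsubN x _ Ox hL; lra.
Qed.
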